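(* Let $f:I\to\mathbb{Q}_4$ be a $3$-generic conformal geodesic with Frenet frame $e:I\to\mathrm{M\ddot{o}b}(4)$, conformal arclength $s$ and curvatures $\mu_1,\mu_2,\mu_3$ (so $\mu_1+\frac32\mu_2^2=C_1$, $\mu_2^2\mu_3=C_2$, $\dot\mu_2^2+\mu_2^4-2C_1\mu_2^2+C_2^2\mu_2^{-2}=C_3$ for constants $C_1,C_2,C_3$). Let $\Phi(s)=e^{-1}\dot e$ be the $6\times6$ matrix (rows/columns indexed $0,\dots,5$) $$\Phi=\begin{pmatrix}0&\mu_1&1&0&0&0\\1&0&0&0&0&\mu_1\\0&0&0&-\mu_2&0&1\\0&0&\mu_2&0&-\mu_3&0\\0&0&0&\mu_3&0&0\\0&1&0&0&0&0\end{pmatrix},\qquad \Theta=\begin{pmatrix}0&1&-\mu_1-\mu_2^2&\dot\mu_2&\mu_2\mu_3&0\\0&0&0&-\mu_2&0&1\\1&0&0&0&0&-\mu_1-\mu_2^2\\0&\mu_2&0&0&0&\dot\mu_2\\0&0&0&0&0&\mu_2\mu_3\\0&0&1&0&0&0\end{pmatrix}.$$ Then $\dot\Theta=\Theta\Phi-\Phi\Theta$ on $I$; consequently $\omega=e\Theta e^{-1}$ is a constant element of the Lie algebra of $\mathrm{M\ddot{o}b}(4)$, and the characteristic polynomial of $\Theta$ (and of $\omega$) is $$\chi(t)=t^6+2C_1t^4-(1+C_3)t^2-C_2^2 .$$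
   Context: $\mathbb{Q}_4$ is the projectivized null cone of $\langle v,w\rangle=\sum_{A=1}^4v^Aw^A-v^0w^5-v^5w^0$ on $\mathbb{R}^6$; $\mathrm{M\ddot{o}b}(4)$ is the identity component of its isometry group. A Frenet frame along a $3$-generic curve $f$ is a smooth $e=(e_0|\dots|e_5):I\to\mathrm{M\ddot{o}b}(4)$ with $[e_0]=f$ whose Maurer–Cartan form $e^{-1}de$ equals $\Phi\,ds$ with $\Phi$ as displayed, $\mu_2>0$, $\mu_3\neq0$; $s$ is the conformal arclength and dots are $d/ds$. Being a conformal geodesic (critical point of the conformal arclength functional under compactly supported variations) is equivalent, for such curves, to $\dot\mu_1+3\mu_2\dot\mu_2=0$, $\ddot\mu_2=\mu_2^3+2\mu_1\mu_2+\mu_2\mu_3^2$, $2\dot\mu_2\mu_3+\mu_2\dot\mu_3=0$, whose first integrals are the stated relations with constants $C_1,C_2,C_3$. *)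

From Stdlib Require Import Reals Lra.
Open Scope R_scope.

(* Square real matrices, indexed by nat; only indices < n are meaningful. *)
Definition Mat := nat -> nat -> R.

Fixpoint rsum (n : nat) (f : nat -> R) : R :=
  match n with O => 0 | S k => rsum k f + f k end.

Definition mmul (n : nat) (A B : Mat) : Mat :=
  fun i j => rsum n (fun k => A i k * B k j).

Definition mtr (A : Mat) : Mat := fun i j => A j i.

Definition minor0 (A : Mat) (j : nat) : Mat :=
  fun i k => A (S i) (if Nat.ltb k j then k else S k).

Fixpoint det (n : nat) (A : Mat) : R :=
  match n with
  | O => 1
  | S m => rsum (S m) (fun j => (-1) ^ j * A 0%nat j * det m (minor0 A j))
  end.

Definition idm : Mat := fun i j => if Nat.eqb i j then 1 else 0.

Definition charpoly6 (A : Mat) (t : R) : R :=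
  det 6 (fun i j => t * idm i j - A i j).

(* Gram matrix of <v,w> = sum_{A=1}^4 v^A w^A - v^0 w^5 - v^5 w^0 *)
Definition Jform : Mat := fun i j =>
  match i, j with
  | 0%nat, 5%nat => -1 | 5%nat, 0%nat => -1
  | 1%nat, 1%nat => 1 | 2%nat, 2%nat => 1 | 3%nat, 3%nat => 1 | 4%nat, 4%nat => 1
  | _, _ => 0 end.

Definition bil (v w : nat -> R) : R :=
  rsum 6 (fun i => rsum 6 (fun j => v i * Jform i j * w j)).

(* Mob(4): identity component of the isometry group of <,>:
   isometries with det 1 preserving time orientation (the timelike
   vector T = e_0 + e_5, <T,T> = -2, is mapped into the same time cone). *)
Definition Tvec : nat -> R := fun i => match i with 0%nat | 5%nat => 1 | _ => 0 end.

Definition in_Mob4 (e : Mat) : Prop :=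
  (forall i j, (i < 6)%nat -> (j < 6)%nat ->
     mmul 6 (mtr e) (mmul 6 Jform e) i j = Jform i j) /\
  det 6 e = 1 /\
  bil (fun i => rsum 6 (fun k => e i k * Tvec k)) Tvec < 0.

Definition in_mob4 (X : Mat) : Prop :=
  forall i j, (i < 6)%nat -> (j < 6)%nat ->
    mmul 6 (mtr X) Jform i j + mmul 6 Jform X i j = 0.

Definition PhiM (m1 m2 m3 : R) : Mat := fun i j =>
  match i, j with
  | 0%nat, 1%nat => m1 | 0%nat, 2%nat => 1
  | 1%nat, 0%nat => 1 | 1%nat, 5%nat => m1
  | 2%nat, 3%nat => - m2 | 2%nat, 5%nat => 1
  | 3%nat, 2%nat => m2 | 3%nat, 4%nat => - m3
  | 4%nat, 3%nat => m3
  | 5%nat, 1%nat => 1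
  | _, _ => 0 end.

(* The matrix Theta; dm2 stands for the derivative of mu_2 *)
Definition ThetaM (m1 m2 m3 dm2 : R) : Mat := fun i j =>
  match i, j with
  | 0%nat, 1%nat => 1 | 0%nat, 2%nat => - m1 - m2 ^ 2 | 0%nat, 3%nat => dm2 | 0%nat, 4%nat => m2 * m3
  | 1%nat, 3%nat => - m2 | 1%nat, 5%nat => 1
  | 2%nat, 0%nat => 1 | 2%nat, 5%nat => - m1 - m2 ^ 2
  | 3%nat, 1%nat => m2 | 3%nat, 5%nat => dm2
  | 4%nat, 5%nat => m2 * m3
  | 5%nat, 2%nat => 1
  | _, _ => 0 end.

Definition is_open_interval (I : R -> Prop) : Prop :=
  (exists x, I x) /\
  (forall x y z, I x -> I y -> x <= z <= y -> I z) /\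
  (forall x, I x -> exists eps, 0 < eps /\ forall y, Rabs (y - x) < eps -> I y).

(* The geodesic equations are exactly what makes Θ satisfy the Lax equation
   Θ' = ΘΦ - ΦΘ.  Since e' = eΦ and e^{-1} = J e^T J for e in Möb(4), the
   conjugate ω = e Θ e^{-1} then has derivative e(ΦΘ + Θ' - ΘΦ)e^{-1} = 0, so it
   is constant on the interval; it lies in the Lie algebra because Θ, like Φ,
   makes ΘJ antisymmetric.  Expanding det(t - Θ) gives a polynomial whose
   coefficients are the first integrals C1, C2, C3, and ω, being conjugate to Θ,
   has the same characteristic polynomial. *)

From Stdlib Require Import Reals Lra Lia FunctionalExtensionality.
From mathcomp Require ssreflect ssrbool ssrnat fintype bigop ssralg matrix Rstruct.
Open Scope R_scope.

Lemma rsum_ext n f g : (forall k, (k < n)%nat -> f k = g k) -> rsum n f = rsum n g.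
Proof.
induction n as [|n IH]; intros Hfg; simpl; [reflexivity|].
rewrite IH, Hfg; [reflexivity | lia | intros; apply Hfg; lia].
Qed.

Lemma rsum_eq0 n f : (forall k, (k < n)%nat -> f k = 0) -> rsum n f = 0.
Proof.
induction n as [|n IH]; intros Hf; simpl; [reflexivity|].
rewrite IH, Hf; [ring | lia | intros; apply Hf; lia].
Qed.

Lemma rsum_plus n f g : rsum n (fun k => f k + g k) = rsum n f + rsum n g.
Proof. induction n as [|n IH]; simpl; [|rewrite IH]; ring. Qed.

Lemma rsum_opp n f : rsum n (fun k => - f k) = - rsum n f.
Proof. induction n as [|n IH]; simpl; [|rewrite IH]; ring. Qed.

Lemma rsum_mult_l n c f : rsum n (fun k => c * f k) = c * rsum n f.
Proof. induction n as [|n IH]; simpl; [|rewrite IH]; ring. Qed.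

Lemma rsum_mult_r n c f : rsum n (fun k => f k * c) = rsum n f * c.
Proof. induction n as [|n IH]; simpl; [|rewrite IH]; ring. Qed.

Lemma rsum_swap n m (f : nat -> nat -> R) :
  rsum n (fun i => rsum m (fun j => f i j)) = rsum m (fun j => rsum n (fun i => f i j)).
Proof.
induction n as [|n IH]; simpl.
- symmetry; apply rsum_eq0; reflexivity.
- rewrite IH, <- rsum_plus; reflexivity.
Qed.

Lemma rsum_idm_r n f j : (j < n)%nat -> rsum n (fun k => f k * idm k j) = f j.
Proof.
induction n as [|n IH]; intros Hj; [lia|]; simpl.
destruct (Nat.eq_dec j n) as [->|Hjn].
- rewrite rsum_eq0; [unfold idm; rewrite Nat.eqb_refl; ring|].
  intros k Hk; unfold idm; rewrite (proj2 (Nat.eqb_neq k n)) by lia; ring.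
- rewrite IH by lia; unfold idm; rewrite (proj2 (Nat.eqb_neq n j)) by lia; ring.
Qed.

Lemma rsum_idm_l n f i : (i < n)%nat -> rsum n (fun k => idm i k * f k) = f i.
Proof.
intros Hi; rewrite <- (rsum_idm_r n f i Hi); apply rsum_ext; intros k _.
unfold idm; rewrite Nat.eqb_sym; ring.
Qed.

Definition madd (A B : Mat) : Mat := fun i j => A i j + B i j.
Definition mopp (A : Mat) : Mat := fun i j => - A i j.
Definition mzero : Mat := fun _ _ => 0.

Lemma mat_ext (A B : Mat) : (forall i j, A i j = B i j) -> A = B.
Proof.
intros H; apply functional_extensionality; intro i.
apply functional_extensionality; intro j; apply H.
Qed.

Lemma mmulA n A B C : mmul n (mmul n A B) C = mmul n A (mmul n B C).
Proof.
apply mat_ext; intros i j; unfold mmul.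
transitivity (rsum n (fun k => rsum n (fun l => A i l * B l k * C k j))).
- apply rsum_ext; intros; rewrite <- rsum_mult_r; reflexivity.
- rewrite rsum_swap; apply rsum_ext; intros; rewrite <- rsum_mult_l.
  apply rsum_ext; intros; ring.
Qed.

Lemma mmulDr n A B C : mmul n A (madd B C) = madd (mmul n A B) (mmul n A C).
Proof.
apply mat_ext; intros i j; unfold mmul, madd; rewrite <- rsum_plus.
apply rsum_ext; intros; ring.
Qed.

Lemma mmulNl n A B : mmul n (mopp A) B = mopp (mmul n A B).
Proof.
apply mat_ext; intros i j; unfold mmul, mopp; rewrite <- rsum_opp.
apply rsum_ext; intros; ring.
Qed.

Lemma mmulNr n A B : mmul n A (mopp B) = mopp (mmul n A B).
Proof.
apply mat_ext; intros i j; unfold mmul, mopp; rewrite <- rsum_opp.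
apply rsum_ext; intros; ring.
Qed.

Lemma mtr_mmul n A B : mtr (mmul n A B) = mmul n (mtr B) (mtr A).
Proof. apply mat_ext; intros i j; unfold mmul, mtr; apply rsum_ext; intros; ring. Qed.

Lemma mmul_ext n A B C D :
  (forall i j, (i < n)%nat -> (j < n)%nat -> A i j = C i j) ->
  (forall i j, (i < n)%nat -> (j < n)%nat -> B i j = D i j) ->
  forall i j, (i < n)%nat -> (j < n)%nat -> mmul n A B i j = mmul n C D i j.
Proof.
intros HAC HBD i j Hi Hj; unfold mmul; apply rsum_ext; intros k Hk.
rewrite HAC, HBD by assumption; reflexivity.
Qed.

Lemma mmul_idm_r n A i j : (j < n)%nat -> mmul n A idm i j = A i j.
Proof. apply rsum_idm_r. Qed.

Lemma mmul_charmx_l n t X Y i j : (i < n)%nat ->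
  mmul n (fun a b => t * idm a b - X a b) Y i j = t * Y i j - mmul n X Y i j.
Proof.
intros Hi; unfold mmul, Rminus.
rewrite <- (rsum_idm_l n (fun k => Y k j) i Hi), <- rsum_mult_l, <- rsum_opp, <- rsum_plus.
apply rsum_ext; intros; ring.
Qed.

Lemma mmul_charmx_r n t X Y i j : (j < n)%nat ->
  mmul n Y (fun a b => t * idm a b - X a b) i j = t * Y i j - mmul n Y X i j.
Proof.
intros Hj; unfold mmul, Rminus.
rewrite <- (rsum_idm_r n (fun k => Y i k) j Hj), <- rsum_mult_l, <- rsum_opp, <- rsum_plus.
apply rsum_ext; intros; ring.
Qed.

Lemma det_ext n A B :
  (forall i j, (i < n)%nat -> (j < n)%nat -> A i j = B i j) -> det n A = det n B.
Proof.
revert A B; induction n as [|n IH]; intros A B HAB; cbn [det]; [reflexivity|].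
apply rsum_ext; intros k Hk; rewrite HAB by lia; f_equal.
apply IH; intros i j Hi Hj; apply HAB; [lia|destruct (Nat.ltb j k); lia].
Qed.

(* Multiplicativity of [det] is inherited from MathComp's [\det], which [det]
   computes by expansion along the first row. *)
Module MxDet.
Import ssreflect ssrbool ssrnat fintype bigop ssralg matrix Rstruct.
Import GRing.Theory.
Local Open Scope ring_scope.

Lemma rsum_big n (f : nat -> R) : rsum n f = \sum_(k < n) f k.
Proof. by elim: n => [|n IH]; rewrite ?big_ord0 // big_ord_recr /= IH. Qed.

Lemma det_mxdet n (A : Mat) : det n A = \det (\matrix_(i < n, j < n) A i j).
Proof.
elim: n A => [|n IH] A; first by rewrite det_mx00.
rewrite [det _ _]/det -/det rsum_big (expand_det_row _ ord0); apply: eq_bigr => j _.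
have minorE : \matrix_(i < n, k < n) minor0 A j i k
            = row' ord0 (col' j (\matrix_(i < n.+1, k < n.+1) A i k)).
  apply/matrixP => i k; rewrite !mxE /minor0 /= /bump add1n.
  have -> : Nat.ltb k j = (k < j)%N.
    by apply/idP/idP => [/Nat.ltb_lt/ltP | /ltP/Nat.ltb_lt].
  by case: ltnP.
by rewrite /cofactor IH -minorE mxE add0n RpowE !RmultE [_ * A _ _]mulrC -mulrA.
Qed.

Lemma det_mmul n (A B : Mat) : det n (mmul n A B) = (det n A * det n B)%R.
Proof.
rewrite !det_mxdet -det_mulmx; congr (\det _); apply/matrixP => i j.
by rewrite !mxE /mmul rsum_big; apply: eq_bigr => k _; rewrite !mxE.
Qed.
End MxDet.

Lemma det_charmx_intertwine n e X Y t : det n e <> 0 ->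
  (forall i j, (i < n)%nat -> (j < n)%nat -> mmul n e X i j = mmul n Y e i j) ->
  det n (fun a b => t * idm a b - Y a b) = det n (fun a b => t * idm a b - X a b).
Proof.
intros He Hint; apply (Rmult_eq_reg_r (det n e)); [|exact He].
rewrite <- MxDet.det_mmul, Rmult_comm, <- MxDet.det_mmul.
apply det_ext; intros i j Hi Hj.
rewrite mmul_charmx_l, mmul_charmx_r, Hint by assumption; reflexivity.
Qed.

Definition is_mderiv (n : nat) (A : R -> Mat) (s : R) (A' : Mat) : Prop :=
  forall i j, (i < n)%nat -> (j < n)%nat -> derivable_pt_lim (fun u => A u i j) s (A' i j).

Lemma is_mderiv_eq n A s A' B' : is_mderiv n A s A' ->
  (forall i j, (i < n)%nat -> (j < n)%nat -> A' i j = B' i j) -> is_mderiv n A s B'.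
Proof. intros HA HAB i j Hi Hj; rewrite <- HAB by assumption; apply HA; assumption. Qed.

Lemma derivable_pt_lim_rsum n (f : nat -> R -> R) (f' : nat -> R) s :
  (forall k, (k < n)%nat -> derivable_pt_lim (f k) s (f' k)) ->
  derivable_pt_lim (fun u => rsum n (fun k => f k u)) s (rsum n f').
Proof.
induction n as [|n IH]; intros Hf; simpl.
- apply derivable_pt_lim_const.
- apply derivable_pt_lim_plus; [apply IH; intros; apply Hf|apply Hf]; lia.
Qed.

Lemma is_mderiv_mmul n A B A' B' s : is_mderiv n A s A' -> is_mderiv n B s B' ->
  is_mderiv n (fun u => mmul n (A u) (B u)) s (madd (mmul n A' (B s)) (mmul n (A s) B')).
Proof.
intros HA HB i j Hi Hj; unfold madd, mmul; rewrite <- rsum_plus.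
apply (derivable_pt_lim_rsum n (fun k u => A u i k * B u k j)); intros k Hk.
apply derivable_pt_lim_mult; [apply HA|apply HB]; assumption.
Qed.

Lemma is_mderiv_mmul_cst_l n C A A' s : is_mderiv n A s A' ->
  is_mderiv n (fun u => mmul n C (A u)) s (mmul n C A').
Proof.
intros HA i j Hi Hj; unfold mmul.
apply (derivable_pt_lim_rsum n (fun k u => C i k * A u k j)); intros k Hk.
apply derivable_pt_lim_scal; apply HA; assumption.
Qed.

Lemma is_mderiv_mmul_cst_r n A C A' s : is_mderiv n A s A' ->
  is_mderiv n (fun u => mmul n (A u) C) s (mmul n A' C).
Proof.
intros HA i j Hi Hj; unfold mmul.
apply (derivable_pt_lim_rsum n (fun k u => A u i k * C k j)); intros k Hk.
rewrite Rmult_comm; apply (derivable_pt_lim_ext (fun u => C k j * A u i k)).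
- intros; apply Rmult_comm.
- apply derivable_pt_lim_scal; apply HA; assumption.
Qed.

Lemma is_mderiv_mtr n A A' s : is_mderiv n A s A' -> is_mderiv n (fun u => mtr (A u)) s (mtr A').
Proof. intros HA i j Hi Hj; apply HA; assumption. Qed.

Lemma derivable_pt_lim_0_const (I : R -> Prop) (f : R -> R) :
  is_open_interval I -> (forall s, I s -> derivable_pt_lim f s 0) ->
  forall a b, I a -> I b -> f a = f b.
Proof.
intros [_ [Hconvex _]] Hf.
assert (Hlt : forall a b, I a -> I b -> a < b -> f a = f b).
{ intros a b Ha Hb Hab.
  assert (Hderiv : forall c, a <= c <= b -> derivable_pt_lim f c 0)
    by (intros c Hc; apply Hf, (Hconvex a b c); assumption).
  destruct (MVT_cor2 f (fun _ => 0) a b Hab Hderiv) as [c [Hmvt _]]; lra. }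
intros a b Ha Hb; destruct (Rtotal_order a b) as [H|[->|H]]; auto.
symmetry; auto.
Qed.

Section FrameConjugation.
Variables (n : nat) (G : Mat).

(* [ginv e] is the inverse of [e] when [e] preserves [G] and [G^2 = 1]. *)
Definition ginv (e : Mat) : Mat := mmul n G (mmul n (mtr e) G).

Definition mconj (e X : Mat) : Mat := mmul n (mmul n e X) (ginv e).

Definition skew_form (X : Mat) : Prop := mmul n G (mtr X) = mopp (mmul n X G).

Lemma ginv_mmul_l e :
  (forall i j, (i < n)%nat -> (j < n)%nat -> mmul n (mtr e) (mmul n G e) i j = G i j) ->
  (forall i j, (i < n)%nat -> (j < n)%nat -> mmul n G G i j = idm i j) ->
  forall i j, (i < n)%nat -> (j < n)%nat -> mmul n (ginv e) e i j = idm i j.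
Proof.
intros He HG i j Hi Hj; unfold ginv; rewrite !mmulA, <- HG by assumption.
apply mmul_ext; auto.
Qed.

Lemma mconj_mmul_r e X :
  (forall i j, (i < n)%nat -> (j < n)%nat -> mmul n (ginv e) e i j = idm i j) ->
  forall i j, (i < n)%nat -> (j < n)%nat -> mmul n (mconj e X) e i j = mmul n e X i j.
Proof.
intros Hinv i j Hi Hj; unfold mconj; rewrite mmulA, <- (mmul_idm_r n (mmul n e X) i j Hj).
apply mmul_ext; auto.
Qed.

Lemma mconj_skew_form e X : mtr G = G -> skew_form X ->
  mmul n (mtr (mconj e X)) G = mopp (mmul n G (mconj e X)).
Proof.
intros HGsym HX; unfold mconj, ginv.
rewrite !mtr_mmul, HGsym; change (mtr (mtr e)) with e.
rewrite !mmulA, <- (mmulA n G (mtr X)), HX, mmulNl, !mmulNr, !mmulA.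
reflexivity.
Qed.

Lemma is_mderiv_mconj_lax (e Theta Phi : R -> Mat) s :
  is_mderiv n e s (mmul n (e s) (Phi s)) ->
  is_mderiv n Theta s (madd (mmul n (Theta s) (Phi s)) (mopp (mmul n (Phi s) (Theta s)))) ->
  skew_form (Phi s) ->
  is_mderiv n (fun u => mconj (e u) (Theta u)) s mzero.
Proof.
intros He HTheta HPhi.
assert (HeTheta : is_mderiv n (fun u => mmul n (e u) (Theta u)) s
                    (mmul n (e s) (mmul n (Theta s) (Phi s)))).
{ eapply is_mderiv_eq; [apply is_mderiv_mmul; eassumption|]; intros i j _ _.
  rewrite mmulDr, mmulNr, !mmulA; unfold madd, mopp; ring. }
assert (Hginv : is_mderiv n (fun u => ginv (e u)) s (mopp (mmul n (Phi s) (ginv (e s))))).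
{ eapply is_mderiv_eq.
  - apply is_mderiv_mmul_cst_l, is_mderiv_mmul_cst_r, is_mderiv_mtr; eassumption.
  - intros i j _ _; unfold ginv.
    rewrite mtr_mmul, <- !mmulA, HPhi, !mmulNl, !mmulA; reflexivity. }
eapply is_mderiv_eq; [apply is_mderiv_mmul; eassumption|]; intros i j _ _.
rewrite mmulNr, !mmulA; unfold madd, mopp, mzero; ring.
Qed.

End FrameConjugation.

Ltac destruct_index i := destruct i as [|[|[|[|[|[|i]]]]]].

Lemma mtr_Jform : mtr Jform = Jform.
Proof. apply mat_ext; intros i j; unfold mtr; destruct_index i; destruct_index j; reflexivity. Qed.

Lemma Jform_mmul_Jform i j : (j < 6)%nat -> mmul 6 Jform Jform i j = idm i j.
Proof. intros Hj; destruct_index i; destruct_index j; try lia; cbv; ring. Qed.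

Lemma PhiM_skew_form m1 m2 m3 : skew_form 6 Jform (PhiM m1 m2 m3).
Proof.
apply mat_ext; intros i j; unfold mmul, mopp, mtr.
destruct_index i; destruct_index j; cbv [rsum Jform PhiM]; ring.
Qed.

Lemma ThetaM_skew_form m1 m2 m3 d : skew_form 6 Jform (ThetaM m1 m2 m3 d).
Proof.
apply mat_ext; intros i j; unfold mmul, mopp, mtr.
destruct_index i; destruct_index j; cbv [rsum Jform ThetaM]; ring.
Qed.

Lemma Mob4_ginv_l e : in_Mob4 e ->
  forall i j, (i < 6)%nat -> (j < 6)%nat -> mmul 6 (ginv 6 Jform e) e i j = idm i j.
Proof.
intros [Hiso _]; apply ginv_mmul_l; [exact Hiso|].
intros i j _ Hj; apply Jform_mmul_Jform; assumption.
Qed.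

Lemma mconj_in_mob4 e X : skew_form 6 Jform X -> in_mob4 (mconj 6 Jform e X).
Proof.
intros HX i j _ _; rewrite (mconj_skew_form 6 Jform e X mtr_Jform HX).
unfold mopp; ring.
Qed.

(* [dd] and [d3] stand for the derivatives of [d2] and [m3]. *)
Definition dThetaM (d1 m2 m3 d2 dd d3 : R) : Mat := fun i j =>
  match i, j with
  | 0%nat, 2%nat | 2%nat, 5%nat => - d1 - 2 * m2 * d2
  | 0%nat, 3%nat | 3%nat, 5%nat => dd
  | 0%nat, 4%nat | 4%nat, 5%nat => d2 * m3 + m2 * d3
  | 1%nat, 3%nat => - d2
  | 3%nat, 1%nat => d2
  | _, _ => 0 end.

Lemma derivable_pt_lim_sqr f s l :
  derivable_pt_lim f s l -> derivable_pt_lim (fun u => f u ^ 2) s (2 * f s * l).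
Proof.
intros Hf; replace (2 * f s * l) with (INR 2 * f s ^ Nat.pred 2 * l) by (simpl; ring).
exact (derivable_pt_lim_comp f (fun y => y ^ 2) s l _ Hf (derivable_pt_lim_pow (f s) 2)).
Qed.

Lemma ThetaM_is_mderiv (m1 m2 m3 d2 : R -> R) d1 dd d3 s :
  derivable_pt_lim m1 s d1 -> derivable_pt_lim m2 s (d2 s) ->
  derivable_pt_lim d2 s dd -> derivable_pt_lim m3 s d3 ->
  is_mderiv 6 (fun u => ThetaM (m1 u) (m2 u) (m3 u) (d2 u)) s
    (dThetaM d1 (m2 s) (m3 s) (d2 s) dd d3).
Proof.
intros Hm1 Hm2 Hd2 Hm3 i j _ _.
assert (Hdiag : derivable_pt_lim (fun u => - m1 u - m2 u ^ 2) s (- d1 - 2 * m2 s * d2 s)).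
{ apply derivable_pt_lim_minus; [apply derivable_pt_lim_opp|apply derivable_pt_lim_sqr];
    assumption. }
assert (Htors : derivable_pt_lim (fun u => m2 u * m3 u) s (d2 s * m3 s + m2 s * d3))
  by (apply derivable_pt_lim_mult; assumption).
assert (Hopp : derivable_pt_lim (fun u => - m2 u) s (- d2 s))
  by (apply derivable_pt_lim_opp; assumption).
destruct_index i; destruct_index j; cbv [ThetaM dThetaM];
  first [apply derivable_pt_lim_const | assumption].
Qed.

Lemma dThetaM_lax m1 m2 m3 d1 d2 dd d3 :
  d1 + 3 * m2 * d2 = 0 -> dd = m2 ^ 3 + 2 * m1 * m2 + m2 * m3 ^ 2 ->
  2 * d2 * m3 + m2 * d3 = 0 ->
  forall i j, (i < 6)%nat -> (j < 6)%nat ->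
  dThetaM d1 m2 m3 d2 dd d3 i j =
  madd (mmul 6 (ThetaM m1 m2 m3 d2) (PhiM m1 m2 m3))
       (mopp (mmul 6 (PhiM m1 m2 m3) (ThetaM m1 m2 m3 d2))) i j.
Proof.
intros E1 -> E3 i j Hi Hj.
destruct_index i; try lia; destruct_index j; try lia;
  cbv [dThetaM madd mopp mmul rsum ThetaM PhiM]; lra.
Qed.

Lemma charpoly6_ThetaM m1 m2 m3 d t :
  charpoly6 (ThetaM m1 m2 m3 d) t =
  t ^ 6 + (2 * m1 + 3 * m2 ^ 2) * t ^ 4
  - (1 + d ^ 2 - 2 * m1 * m2 ^ 2 - 2 * m2 ^ 4 + m2 ^ 2 * m3 ^ 2) * t ^ 2
  - m2 ^ 4 * m3 ^ 2.
Proof. cbv [charpoly6 ThetaM idm det rsum minor0 Nat.ltb Nat.leb Nat.eqb]; ring. Qed.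
Theorem mainTheorem10
  (I : R -> Prop) (e : R -> Mat)
  (mu1 mu2 mu3 dmu1 dmu2 ddmu2 dmu3 : R -> R) (C1 C2 C3 : R) :
  is_open_interval I ->
  (forall s, I s -> derivable_pt_lim mu1 s (dmu1 s)) ->
  (forall s, I s -> derivable_pt_lim mu2 s (dmu2 s)) ->
  (forall s, I s -> derivable_pt_lim dmu2 s (ddmu2 s)) ->
  (forall s, I s -> derivable_pt_lim mu3 s (dmu3 s)) ->
  (* 3-genericity *)
  (forall s, I s -> 0 < mu2 s) ->
  (forall s, I s -> mu3 s <> 0) ->
  (* Frenet frame: e takes values in Mob(4) and e^{-1} de/ds = Phi *)
  (forall s, I s -> in_Mob4 (e s)) ->
  (forall s, I s -> forall i j, (i < 6)%nat -> (j < 6)%nat ->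
     derivable_pt_lim (fun u => e u i j) s
       (mmul 6 (e s) (PhiM (mu1 s) (mu2 s) (mu3 s)) i j)) ->
  (* conformal geodesic equations *)
  (forall s, I s -> dmu1 s + 3 * mu2 s * dmu2 s = 0) ->
  (forall s, I s -> ddmu2 s = mu2 s ^ 3 + 2 * mu1 s * mu2 s + mu2 s * mu3 s ^ 2) ->
  (forall s, I s -> 2 * dmu2 s * mu3 s + mu2 s * dmu3 s = 0) ->
  (* first integrals *)
  (forall s, I s -> mu1 s + 3 / 2 * mu2 s ^ 2 = C1) ->
  (forall s, I s -> mu2 s ^ 2 * mu3 s = C2) ->
  (forall s, I s -> dmu2 s ^ 2 + mu2 s ^ 4 - 2 * C1 * mu2 s ^ 2
                     + C2 ^ 2 / mu2 s ^ 2 = C3) ->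
  let Theta := fun s => ThetaM (mu1 s) (mu2 s) (mu3 s) (dmu2 s) in
  let Phi := fun s => PhiM (mu1 s) (mu2 s) (mu3 s) in
  (forall s, I s -> forall i j, (i < 6)%nat -> (j < 6)%nat ->
     derivable_pt_lim (fun u => Theta u i j) s
       (mmul 6 (Theta s) (Phi s) i j - mmul 6 (Phi s) (Theta s) i j)) /\
  (* omega = e Theta e^{-1} is a constant element omega0 of the Lie algebra *)
  (exists omega0 : Mat, in_mob4 omega0 /\
     forall s, I s -> forall i j, (i < 6)%nat -> (j < 6)%nat ->
       mmul 6 (e s) (Theta s) i j = mmul 6 omega0 (e s) i j) /\
  (forall s, I s -> forall t,
     charpoly6 (Theta s) t = t ^ 6 + 2 * C1 * t ^ 4 - (1 + C3) * t ^ 2 - C2 ^ 2) /\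
  (forall omega0 : Mat,
     (forall s, I s -> forall i j, (i < 6)%nat -> (j < 6)%nat ->
        mmul 6 (e s) (Theta s) i j = mmul 6 omega0 (e s) i j) ->
     forall t, charpoly6 omega0 t = t ^ 6 + 2 * C1 * t ^ 4 - (1 + C3) * t ^ 2 - C2 ^ 2).
Proof.
intros HI Hmu1 Hmu2 Hdmu2 Hmu3 Hmu2_pos _ HMob Hframe Hgeo1 Hgeo2 Hgeo3 HC1 HC2 HC3
  Theta Phi.
assert (Hlax : forall s, I s -> is_mderiv 6 Theta s
          (madd (mmul 6 (Theta s) (Phi s)) (mopp (mmul 6 (Phi s) (Theta s))))).
{ intros s Hs; eapply is_mderiv_eq; [apply ThetaM_is_mderiv; auto|].
  apply dThetaM_lax; auto. }
pose proof HI as [[s0 Hs0] _].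
set (omega := fun s => mconj 6 Jform (e s) (Theta s)).
assert (Hintertwine : forall s, I s -> forall i j, (i < 6)%nat -> (j < 6)%nat ->
          mmul 6 (e s) (Theta s) i j = mmul 6 (omega s0) (e s) i j).
{ intros s Hs i j Hi Hj.
  rewrite <- (mconj_mmul_r 6 Jform (e s) (Theta s) (Mob4_ginv_l _ (HMob s Hs)) i j Hi Hj).
  apply mmul_ext; auto; intros a b Ha Hb.
  apply (derivable_pt_lim_0_const I (fun u => omega u a b) HI); auto.
  intros u Hu; apply (is_mderiv_mconj_lax 6 Jform e Theta Phi u
    (Hframe u Hu) (Hlax u Hu) (PhiM_skew_form _ _ _)); assumption. }
assert (Hcharpoly : forall s, I s -> forall t,
          charpoly6 (Theta s) t = t ^ 6 + 2 * C1 * t ^ 4 - (1 + C3) * t ^ 2 - C2 ^ 2).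
{ intros s Hs t; unfold Theta; rewrite charpoly6_ThetaM, <- (HC3 s Hs), <- (HC2 s Hs), <- (HC1 s Hs).
  field; specialize (Hmu2_pos s Hs); lra. }
split; [exact Hlax|split; [|split; [exact Hcharpoly|]]].
- exists (omega s0); split; [apply mconj_in_mob4, ThetaM_skew_form | exact Hintertwine].
- intros w Hw t; rewrite <- (Hcharpoly s0 Hs0 t); unfold charpoly6.
  destruct (HMob s0 Hs0) as [_ [Hdet _]].
  apply (det_charmx_intertwine 6 (e s0)); [rewrite Hdet; lra | apply Hw, Hs0].
Qed.
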